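(* Let $\mathscr G=(\mathscr V,\mathscr E)$ be a finite connected graph with $N$ vertices and $M\ge0$ an integer. The unique stationary distribution $\pi_X$ of the uniform reshuffling model on $\mathscr C_{N,M}$ is the uniform distribution on $\mathscr C_{N,M}$.
   Context: $\mathscr C_{N,M}$ is the set of maps $\xi:\mathscr V\to\mathbb N$ with $\sum_x\xi(x)=M$. The uniform reshuffling model is the discrete-time Markov chain on $\mathscr C_{N,M}$: at each step an edge $(x,y)\in\mathscr E$ is chosen uniformly at random, $U$ is drawn uniformly from $\{0,1,\dots,X_t(x)+X_t(y)\}$, and $X_{t+1}(x)=U$, $X_{t+1}(y)=X_t(x)+X_t(y)-U$, $X_{t+1}(z)=X_t(z)$ for $z\notin\{x,y\}$. This chain has a unique stationary distribution, denoted $\pi_X$. *)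

From mathcomp Require Import all_boot all_order all_algebra.
Set Implicit Arguments. Unset Strict Implicit. Unset Printing Implicit Defensive.
Import Order.TTheory GRing.Theory Num.Theory.
Local Open Scope ring_scope.

(* Configurations C_{N,M}: maps xi : V -> nat with sum M.  Since every value
   is then <= M, we encode xi as a finite function V -> 'I_(M.+1). *)
Definition config_pred (V : finType) (M : nat) : pred {ffun V -> 'I_M.+1} :=
  fun xi => (\sum_(x : V) (xi x : nat) == M)%N.
Definition config (V : finType) (M : nat) : finType :=
  {xi : {ffun V -> 'I_M.+1} | @config_pred V M xi}.

Definition cval (V : finType) (M : nat) (xi : config V M) (x : V) : nat :=
  nat_of_ord (sval xi x).

Definition edges (V : finType) (e : rel V) : {set V * V} :=
  [set p : V * V | e p.1 p.2].

(* Transition probability of the uniform reshuffling model: choose an edge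
   (x,y) uniformly, then a uniform U in {0,...,xi x + xi y}, set
   eta x = U, eta y = xi x + xi y - U, other coordinates unchanged. *)
Definition reshuffle_P (R : realFieldType) (V : finType) (e : rel V) (M : nat)
    (xi eta : config V M) : R :=
  (#|edges e|%:R)^-1 *
  \sum_(p in edges e)
     (if [forall z : V, ((z != p.1) && (z != p.2)) ==> (cval eta z == cval xi z)]
         && (cval eta p.1 + cval eta p.2 == cval xi p.1 + cval xi p.2)%N
      then ((cval xi p.1 + cval xi p.2).+1%:R)^-1 else 0).

Definition is_distr (R : realFieldType) (T : finType) (pi : T -> R) : Prop :=
  (forall t, 0 <= pi t) /\ \sum_(t : T) pi t = 1.

Definition is_stationary (R : realFieldType) (V : finType) (e : rel V) (M : nat)
    (pi : config V M -> R) : Prop :=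
  forall eta : config V M, \sum_(xi : config V M) pi xi * reshuffle_P R e xi eta = pi eta.

Definition uniform_distr (R : realFieldType) (T : finType) : T -> R :=
  fun _ => (#|T|%:R)^-1.
Arguments reshuffle_P R [V] e [M] xi eta.
Arguments is_stationary R [V] e [M] pi.
Arguments is_distr R [T] pi.
Arguments uniform_distr R T _ : clear implicits.

From mathcomp Require Import all_boot all_order all_algebra.
From mathcomp Require Import zify.
Import Order.TTheory GRing.Theory Num.Theory.
Local Open Scope ring_scope.
Set Implicit Arguments. Unset Strict Implicit.

(** The reshuffling kernel is doubly stochastic: for a fixed edge (x, y) and a
    target configuration eta, the configurations reshuffled to eta along
    (x, y) are exactly the s + 1 configurations that agree with eta off
    {x, y} and carry the same total s = eta x + eta y on {x, y}, and each of
    them contributes 1 / (s + 1).  Hence the uniform distribution is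
    stationary.  Conversely, double stochasticity yields a maximum principle:
    if a stationary pi is maximal at eta, it is maximal at every configuration
    one reshuffle away from eta.  Moving a single particle along a path of the
    connected graph is a sequence of reshuffles, so every configuration is
    linked to the one with all M particles on a fixed vertex; the chain is
    irreducible and pi is constant. *)

Section Configurations.
Variables (V : finType) (M : nat).
Implicit Types (a b c : config V M) (v w x y z : V).

Lemma config_inj a b : cval a =1 cval b -> a = b.
Proof. by move=> eq_ab; apply/val_inj/ffunP => w; apply/val_inj/eq_ab. Qed.

Lemma sum_cval a : (\sum_w cval a w)%N = M.
Proof. by case: a => f f_sum; apply/eqP. Qed.

Lemma config_of_sum (f : V -> nat) :
  (\sum_w f w)%N = M -> {a : config V M | cval a =1 f}.
Proof.
move=> f_sum; have f_le w : (f w < M.+1)%N.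
  by rewrite ltnS -f_sum (bigD1 w) //= leq_addr.
pose g : {ffun V -> 'I_M.+1} := [ffun w => inord (f w)].
have g_sum : @config_pred V M g.
  by rewrite /config_pred (eq_bigr f) ?f_sum // => w _; rewrite ffunE inordK.
by exists (exist _ g g_sum) => w; rewrite /cval /= ffunE inordK.
Qed.

Lemma exists_concentrated v : {a : config V M | cval a v = M}.
Proof.
have f_sum : (\sum_w (if w == v then M else 0) = M)%N.
  by rewrite (bigD1 v) //= eqxx big1 ?addn0 // => w /negbTE ->.
have [a a_def] := config_of_sum f_sum.
by exists a; rewrite a_def eqxx.
Qed.

Lemma card_config_gt0 : (0 < #|V|)%N -> (0 < #|config V M|)%N.
Proof.
by case/card_gt0P => v _; apply/card_gt0P; exists (sval (exists_concentrated v)).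
Qed.

Lemma concentrated_eq a b v : cval a v = M -> cval b v = M -> a = b.
Proof.
have off_v c w : cval c v = M -> w != v -> cval c w = 0%N.
  move=> cv_M w_v; have := sum_cval c; rewrite (bigD1 v) //= cv_M.
  by rewrite (bigD1 w) //=; lia.
move=> av_M bv_M; apply: config_inj => w.
case: (eqVneq w v) => [->|w_v]; first by rewrite av_M bv_M.
by rewrite (off_v a) // (off_v b).
Qed.

Definition resh_link x y : rel (config V M) := fun a b =>
  [forall z, ((z != x) && (z != y)) ==> (cval a z == cval b z)]
  && (cval a x + cval a y == cval b x + cval b y)%N.

Lemma resh_linkP x y a b :
  reflect ((forall z, z != x -> z != y -> cval a z = cval b z)
           /\ (cval a x + cval a y = cval b x + cval b y)%N)
          (resh_link x y a b).
Proof.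
apply: (iffP andP) => [[/forallP off /eqP on]|[off on]]; split; last exact/eqP.
- by move=> z zx zy; apply/eqP; have /implyP := off z; apply; rewrite zx zy.
- exact: on.
- by apply/forallP => z; apply/implyP => /andP[zx zy]; rewrite off.
Qed.

Lemma resh_linkC x y : symmetric (resh_link x y).
Proof.
move=> a b; apply/resh_linkP/resh_linkP => -[off on]; split=> // z zx zy.
all: by rewrite off.
Qed.

Lemma move_particle a x z : (0 < cval a x)%N ->
  {b : config V M | forall w, cval b w + (w == x) = cval a w + (w == z)}%N.
Proof.
move=> ax_gt0.
have moved w : (cval a w + (w == z) - (w == x) + (w == x) = cval a w + (w == z))%N.
  by case: (eqVneq w x) => [->|] /=; lia.
have f_sum : (\sum_w (cval a w + (w == z) - (w == x)) = M)%N.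
  have sum_ind (t : V) : (\sum_w (w == t) = 1)%N.
    by rewrite (bigD1 t) //= eqxx big1 // => w /negbTE ->.
  apply/eqP; rewrite -(eqn_add2r 1) -{1}(sum_ind x) -big_split /=.
  by rewrite (eq_bigr _ (fun w _ => moved w)) big_split /= sum_cval sum_ind.
have [b b_def] := config_of_sum f_sum.
by exists b => w; rewrite b_def moved.
Qed.

Lemma resh_link_move a b x z :
  (forall w, cval b w + (w == x) = cval a w + (w == z))%N -> resh_link x z a b.
Proof.
move=> b_def; apply/resh_linkP; split.
  by move=> w /negbTE wx /negbTE wz; have := b_def w; rewrite wx wz; lia.
by have := b_def x; have := b_def z; rewrite !eqxx [z == x]eq_sym; lia.
Qed.

Lemma resh_link_inj a b c x y :
  resh_link x y a b -> resh_link x y a c -> cval b x = cval c x -> b = c.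
Proof.
move=> /resh_linkP[off_b on_b] /resh_linkP[off_c on_c] bc_x; apply: config_inj => z.
case: (eqVneq z x) => [->//|zx]; case: (eqVneq z y) => [->|zy]; first lia.
by rewrite -(off_b z zx zy) (off_c z zx zy).
Qed.

Lemma resh_link_exists a x y k : x != y -> (k <= cval a x + cval a y)%N ->
  exists2 b, resh_link x y a b & cval b x = k.
Proof.
move=> xy k_le; set s := (cval a x + cval a y)%N in k_le.
pose g w := if w == x then k else if w == y then (s - k)%N else cval a w.
have g_sum : (\sum_w g w)%N = M.
  rewrite -(sum_cval a) (bigD1 x) //= [in RHS](bigD1 x) //=.
  rewrite (bigD1 y) 1?eq_sym //= [in RHS](bigD1 y) 1?eq_sym //=.
  rewrite /g eqxx [y == x]eq_sym (negbTE xy) eqxx (eq_bigr (cval a)) /s.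
    by lia.
  by move=> w /andP[/negbTE -> /negbTE ->].
have [b b_def] := config_of_sum g_sum.
exists b; last by rewrite b_def /g eqxx.
apply/resh_linkP; split.
  by move=> z /negbTE zx /negbTE zy; rewrite b_def /g zx zy.
by rewrite !b_def /g eqxx [y == x]eq_sym (negbTE xy) eqxx -/s; lia.
Qed.

Lemma card_resh_link a x y : x != y ->
  #|[set b | resh_link x y a b]| = (cval a x + cval a y).+1.
Proof.
move=> xy; set s := (cval a x + cval a y)%N.
pose f b : 'I_s.+1 := inord (cval b x).
have fE b : resh_link x y a b -> cval b x = f b.
  by case/resh_linkP => _ on; rewrite inordK // ltnS /s on leq_addr.
have f_inj : {in [set b | resh_link x y a b] &, injective f}.
  move=> b c; rewrite !inE => ab ac fbc; apply: (resh_link_inj ab ac).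
  by rewrite (fE b ab) (fE c ac) fbc.
rewrite -(card_in_imset f_inj) -[RHS]card_ord -cardsT.
apply: eq_card => k; rewrite in_setT; apply/imsetP.
have [|b ab bx] := @resh_link_exists a x y k xy; first by rewrite -ltnS.
by exists b; rewrite ?inE //; apply: val_inj; rewrite /= -fE.
Qed.

End Configurations.

Section Irreducibility.
Variables (V : finType) (M : nat) (e : rel V).

Definition linked : rel (config V M) :=
  fun a b => [exists x, exists y, e x y && resh_link x y a b].

Lemma linked_sym : symmetric linked.
Proof.
suff imp a b : linked a b -> linked b a by move=> a b; apply/idP/idP; apply: imp.
case/existsP => x /existsP[y /andP[exy ab]].
by apply/existsP; exists x; apply/existsP; exists y; rewrite exy resh_linkC.
Qed.

Lemma connect_linked_path x p (a b : config V M) :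
  path e x p -> (0 < cval a x)%N ->
  (forall w, cval b w + (w == x) = cval a w + (w == last x p))%N ->
  connect linked a b.
Proof.
elim: p x a => [|z p IHp] x a /=.
  by move=> _ _ b_def; rewrite (@config_inj _ _ b a) // => w; have := b_def w; lia.
case/andP=> exz z_p ax_gt0 b_def; have [c c_def] := move_particle z ax_gt0.
have ac : linked a c.
  by apply/existsP; exists x; apply/existsP; exists z; rewrite exz resh_link_move.
apply: connect_trans (connect1 ac) (IHp z c z_p _ _).
  have := c_def z; rewrite eqxx.
  by case: (eqVneq z x) => [->|_]; lia.
by move=> w; have := b_def w; have := c_def w; lia.
Qed.

Hypothesis e_conn : forall x y, connect e x y.

Lemma connect_linked_concentrated v (a b : config V M) :
  cval b v = M -> connect linked a b.
Proof.
move=> bv_M; have [n] := ubnP (M - cval a v)%N.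
elim: n a => // n IHn a; rewrite ltnS => a_lt.
case: (pickP (fun x => (x != v) && (0 < cval a x)%N)) => [x /andP[xv ax_gt0]|none].
  have [c c_def] := move_particle v ax_gt0.
  have ac : connect linked a c.
    have /connectP[p x_p last_p] := e_conn x v.
    by apply: connect_linked_path x_p ax_gt0 _; rewrite -last_p.
  apply: connect_trans ac (IHn c _).
  have := c_def v; have := sum_cval c; rewrite (bigD1 v) //= eqxx eq_sym (negbTE xv).
  lia.
suff av_M : cval a v = M by rewrite (concentrated_eq av_M bv_M) connect0.
rewrite -[RHS](sum_cval a) (bigD1 v) //= big1 ?addn0 // => w wv.
by apply/eqP; rewrite -leqn0 leqNgt; move: (none w); rewrite wv /= => ->.
Qed.

Lemma connect_linked (a b : config V M) : connect linked a b.
Proof.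
case: (pickP (@predT V)) => [v _|V0]; last first.
  by rewrite (@config_inj _ _ a b) ?connect0 // => w; have := V0 w.
have [c cv_M] := exists_concentrated M v.
apply: connect_trans (connect_linked_concentrated a cv_M) _.
by rewrite (sym_connect_sym linked_sym) (connect_linked_concentrated b cv_M).
Qed.

End Irreducibility.

Lemma card_edges_gt0 (V : finType) (e : rel V) :
  (1 < #|V|)%N -> (forall x y, connect e x y) -> (0 < #|edges e|)%N.
Proof.
case/card_gt1P => x [y [_ _ xy]] /(_ x y) /connectP[[|z p] /= x_p y_def].
  by rewrite y_def eqxx in xy.
by apply/card_gt0P; exists (x, z); rewrite inE; case/andP: x_p.
Qed.

Section ReshuffleKernel.
Variables (R : realFieldType) (V : finType) (e : rel V) (M : nat).
Implicit Types (a b xi eta : config V M) (pi : config V M -> R).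

Lemma reshuffle_PE xi eta : reshuffle_P R e xi eta =
  #|edges e|%:R^-1 * \sum_(p in edges e)
    (if resh_link p.1 p.2 eta xi then ((cval xi p.1 + cval xi p.2).+1%:R)^-1 else 0).
Proof. by []. Qed.

Lemma reshuffle_P_ge0 xi eta : 0 <= reshuffle_P R e xi eta.
Proof.
rewrite reshuffle_PE mulr_ge0 ?invr_ge0 ?ler0n // sumr_ge0 // => p _.
by case: ifP; rewrite ?invr_ge0 ?ler0n.
Qed.

Lemma reshuffle_P_gt0 xi eta : linked e eta xi -> 0 < reshuffle_P R e xi eta.
Proof.
case/existsP => x /existsP[y /andP[exy link]]; have xy_E : (x, y) \in edges e by rewrite inE.
rewrite reshuffle_PE mulr_gt0 ?invr_gt0 ?ltr0n //; first by apply/card_gt0P; exists (x, y).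
rewrite (bigD1 (x, y)) //= link ltr_wpDr ?invr_gt0 ?ltr0n // sumr_ge0 // => p _.
by case: ifP; rewrite ?invr_ge0 ?ler0n.
Qed.

Lemma sum_resh_link_weights eta x y : x != y ->
  \sum_xi (if resh_link x y eta xi then ((cval xi x + cval xi y).+1%:R)^-1 else 0)
  = 1 :> R.
Proof.
move=> xy; set s := (cval eta x + cval eta y)%N.
rewrite (eq_bigr (fun xi => if xi \in [set b | resh_link x y eta b] then s.+1%:R^-1 else 0)).
  by rewrite -big_mkcond sumr_const card_resh_link // -/s -[_ *+ _]mulr_natr mulVf ?pnatr_eq0.
by move=> xi _; rewrite inE; case: ifP => // /resh_linkP[_ <-].
Qed.

Hypotheses (e_irr : irreflexive e) (E_gt0 : (0 < #|edges e|)%N).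

Lemma sum_reshuffle_P eta : \sum_xi reshuffle_P R e xi eta = 1.
Proof.
rewrite (eq_bigr _ (fun xi _ => reshuffle_PE xi eta)) -mulr_sumr exchange_big /=.
rewrite (eq_bigr (fun=> 1)).
  by rewrite sumr_const mulVf // pnatr_eq0 -lt0n.
case=> x y; rewrite inE /= => exy; apply: sum_resh_link_weights.
by apply: contraTneq exy => ->; rewrite e_irr.
Qed.

Lemma uniform_stationary : is_stationary R e (uniform_distr R (config V M)).
Proof. by move=> eta; rewrite /uniform_distr -mulr_sumr sum_reshuffle_P mulr1. Qed.

Lemma stationary_max_linked pi a b : is_stationary R e pi ->
  (forall c, pi c <= pi a) -> linked e a b -> pi b = pi a.
Proof.
move=> pi_stat a_max ab.
have defect0 : \sum_c (pi a - pi c) * reshuffle_P R e c a = 0.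
  under eq_bigr => c _ do rewrite mulrBl.
  by rewrite sumrB -mulr_sumr sum_reshuffle_P mulr1 pi_stat subrr.
have defect_ge0 c : true -> 0 <= (pi a - pi c) * reshuffle_P R e c a.
  by move=> _; rewrite mulr_ge0 ?subr_ge0 ?reshuffle_P_ge0.
move/eqP: (psumr_eq0P defect_ge0 defect0 (i := b) isT).
by rewrite mulf_eq0 (gt_eqF (reshuffle_P_gt0 ab)) orbF subr_eq0 => /eqP.
Qed.

Lemma stationary_const pi : (forall x y, connect e x y) ->
  is_stationary R e pi -> forall a b, pi a = pi b.
Proof.
move=> e_conn pi_stat a b.
have [m _ m_max] := @arg_maxP _ _ (config V M) a predT pi isT.
have max_closed : closed (linked e) [pred c | pi c == pi m].
  apply: intro_closed; first exact: sym_connect_sym (@linked_sym _ _ e).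
  move=> c d cd /eqP cm; apply/eqP; rewrite -cm.
  by apply: stationary_max_linked cd => // c'; rewrite cm; apply: m_max.
have pi_m c : pi c = pi m.
  have := closed_connect max_closed (connect_linked e_conn m c).
  by rewrite !inE eqxx => /esym/eqP.
by rewrite !pi_m.
Qed.

End ReshuffleKernel.

Section UniformDistribution.
Variables (R : realFieldType) (T : finType).

Lemma uniform_is_distr : (0 < #|T|)%N -> is_distr R (uniform_distr R T).
Proof.
move=> T_gt0; split=> [t|]; first by rewrite invr_ge0 ler0n.
by rewrite sumr_const -[_ *+ _]mulr_natr mulVf // pnatr_eq0 -lt0n.
Qed.

Lemma const_distr_uniform (pi : T -> R) :
  is_distr R pi -> (forall s t, pi s = pi t) -> forall t, pi t = uniform_distr R T t.
Proof.
move=> [_ pi_sum] pi_const t.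
have T_gt0 : (#|T|%:R : R) != 0 by rewrite pnatr_eq0 -lt0n; apply/card_gt0P; exists t.
move: pi_sum; rewrite (eq_bigr _ (fun s _ => pi_const s t)) sumr_const -[_ *+ _]mulr_natr.
by move=> pi_t; apply: (mulIf T_gt0); rewrite pi_t mulVf.
Qed.

End UniformDistribution.

Theorem lemma2 (R : realFieldType) (V : finType) (e : rel V) (M : nat)
    (e_sym : symmetric e) (e_irr : irreflexive e)
    (e_conn : forall x y : V, connect e x y)
    (hN : (1 < #|V|)%N) :
  (is_distr R (uniform_distr R (config V M))
   /\ is_stationary R e (uniform_distr R (config V M)))
  /\ forall pi : config V M -> R, is_distr R pi -> is_stationary R e pi ->
       forall xi, pi xi = uniform_distr R (config V M) xi.
Proof.
have E_gt0 := card_edges_gt0 hN e_conn.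
have C_gt0 : (0 < #|config V M|)%N by apply/card_config_gt0/ltnW.
split; first by split; [apply: uniform_is_distr | apply: uniform_stationary].
move=> pi pi_distr pi_stat; apply: const_distr_uniform => // a b.
exact: stationary_const pi_stat a b.
Qed.
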